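(* Let $(X,\mathcal{O}(X))$ be a measurable space, $\mathcal{A}$ a unital $C^*$-algebra and $\mathcal{H}$ a Hilbert space. Every spectral instrument $\mathcal{I}:\mathcal{O}(X)\to CP(\mathcal{A},\mathcal{B}(\mathcal{H}))$ is a $C^*$-extreme point of $I_{\mathcal{H}}(X,\mathcal{A})$.
   Context: A CP instrument is a map $\mathcal{I}$ from $\mathcal{O}(X)$ to the completely positive maps $\mathcal{A}\to\mathcal{B}(\mathcal{H})$ such that for all $a\in\mathcal{A}$, $h,k\in\mathcal{H}$, $A\mapsto\langle h,\mathcal{I}(A)(a)k\rangle$ is a countably additive complex measure. It is UCP if $\mathcal{I}(X)(1_\mathcal{A})=I_\mathcal{H}$; $I_{\mathcal{H}}(X,\mathcal{A})$ is the set of UCP instruments. It is spectral if it is UCP and $\mathcal{I}(A)$ is a $*$-homomorphism for every $A\in\mathcal{O}(X)$. $\mathcal{I}$ is $C^*$-extreme if whenever $\mathcal{I}(\cdot)=\sum_{i=1}^nT_i^*\mathcal{I}_i(\cdot)T_i$ with $\mathcal{I}_i\in I_{\mathcal{H}}(X,\mathcal{A})$ and invertible $T_i\in\mathcal{B}(\mathcal{H})$, $\sum T_i^*T_i=I_\mathcal{H}$, there are unitaries $U_i$ with $\mathcal{I}_i(\cdot)=U_i^*\mathcal{I}(\cdot)U_i$ for all $i$. *)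

From HB Require Import structures.
From mathcomp Require Import all_boot all_order all_algebra.
From mathcomp Require Import complex.
From mathcomp Require Import classical_sets reals measure.

Set Implicit Arguments.
Unset Strict Implicit.
Unset Printing Implicit Defensive.

Import Order.TTheory GRing.Theory Num.Theory.
Local Open Scope ring_scope.
Local Open Scope classical_set_scope.

(* Complex numbers are R[i] for R : realType.  The (partial) order of the
   numClosedField R[i] is used: [0 <= z] means z is real and nonnegative,
   [x <= y] for real x, y is the usual order. *)

Section Defs.
Variable R : realType.
Local Notation C := (R[i]).

Definition series_to (u : nat -> C) (l : C) : Prop :=
  forall e : C, 0 < e -> exists N : nat, forall n : nat, (N <= n)%N ->
    `| \sum_(i < n) u i - l | < e.

(* A is a unital complex algebra (algType), [star] the involution and
   [nA] the norm (values in C, required real nonnegative). *)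
Section CStar.
Variable A : algType C.
Variables (star : A -> A) (nA : A -> C).

Definition unital_Cstar_algebra : Prop :=
  ([/\ (forall a, star (star a) = a),
      (forall a b, star (a + b) = star a + star b),
      (forall (c : C) a, star (c *: a) = (c^*) *: star a) &
      (forall a b, star (a * b) = star b * star a)]) /\
  ([/\ (forall a, 0 <= nA a),
      (forall a, nA a = 0 -> a = 0),
      (forall a b, nA (a + b) <= nA a + nA b),
      (forall (c : C) a, nA (c *: a) = `|c| * nA a) &
      (forall a b, nA (a * b) <= nA a * nA b)]) /\
  (forall a, nA (star a * a) = nA a ^+ 2) /\
  (forall u : nat -> A,
     (forall e : C, 0 < e -> exists N : nat, forall m n : nat,
         (N <= m)%N -> (N <= n)%N -> nA (u m - u n) < e) ->
     exists x : A, forall e : C, 0 < e -> exists N : nat,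
         forall n : nat, (N <= n)%N -> nA (u n - x) < e).

(* positive elements of M_n(A): matrices of the form y^* y *)
Definition posM (n : nat) (a : 'I_n -> 'I_n -> A) : Prop :=
  exists y : 'I_n -> 'I_n -> A,
    forall i j, a i j = \sum_(k < n) star (y k i) * y k j.
End CStar.

(* inner product linear in the second, conjugate-linear in the first slot *)
Section Hilbert.
Variable H : lmodType C.
Variable ip : H -> H -> C.

Definition hilbert_space : Prop :=
  [/\ (forall (c : C) x y z, ip x (c *: y + z) = c * ip x y + ip x z),
      (forall x y, ip y x = (ip x y)^*),
      (forall x, 0 <= ip x x),
      (forall x, ip x x = 0 -> x = 0) &
      (forall u : nat -> H,
         (forall e : C, 0 < e -> exists N : nat, forall m n : nat,
             (N <= m)%N -> (N <= n)%N -> ip (u m - u n) (u m - u n) < e) ->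
         exists x : H, forall e : C, 0 < e -> exists N : nat,
             forall n : nat, (N <= n)%N -> ip (u n - x) (u n - x) < e)].

Definition bounded_op (T : H -> H) : Prop :=
  (forall (c : C) x y, T (c *: x + y) = c *: T x + T y) /\
  exists M : C, 0 <= M /\ forall x, ip (T x) (T x) <= M * ip x x.

Definition is_adjoint (T S : H -> H) : Prop :=
  forall h k, ip (T h) k = ip h (S k).

Definition invertible_op (T : H -> H) : Prop :=
  bounded_op T /\ exists S, bounded_op S /\ cancel T S /\ cancel S T.

Definition unitary_op (U : H -> H) : Prop :=
  bounded_op U /\
  exists V, [/\ bounded_op V, is_adjoint U V, cancel U V & cancel V U].
End Hilbert.

Section Instruments.
Variable A : algType C.
Variable star : A -> A.
Variable H : lmodType C.
Variable ip : H -> H -> C.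

Definition CP_map (phi : A -> H -> H) : Prop :=
  [/\ (forall (c : C) a b h, phi (c *: a + b) h = c *: phi a h + phi b h),
      (forall a, bounded_op ip (phi a)) &
      (forall (n : nat) (a : 'I_n -> 'I_n -> A), posM star a ->
         forall h : 'I_n -> H,
           0 <= \sum_(i < n) \sum_(j < n) ip (h i) (phi (a i j) (h j)))].

Definition star_hom (phi : A -> H -> H) : Prop :=
  [/\ (forall (c : C) a b h, phi (c *: a + b) h = c *: phi a h + phi b h),
      (forall a, bounded_op ip (phi a)),
      (forall a b h, phi (a * b) h = phi a (phi b h)) &
      (forall a, is_adjoint ip (phi a) (phi (star a)))].

Variables (d : measure_display) (X : measurableType d).

Definition countably_additive (mu : set X -> C) : Prop :=
  forall F : nat -> set X, (forall n, measurable (F n)) ->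
    trivIset setT F -> series_to (fun n => mu (F n)) (mu (\bigcup_n F n)).

(* CP instrument; only its values on measurable sets O(X) matter *)
Definition CP_instrument (I : set X -> A -> H -> H) : Prop :=
  (forall E, measurable E -> CP_map (I E)) /\
  (forall a h k, countably_additive (fun E => ip h (I E a k))).

(* UCP instrument, i.e. element of I_H(X, A) *)
Definition UCP_instrument (I : set X -> A -> H -> H) : Prop :=
  CP_instrument I /\ forall h, I setT 1 h = h.

Definition spectral_instrument (I : set X -> A -> H -> H) : Prop :=
  UCP_instrument I /\ forall E, measurable E -> star_hom (I E).

Definition Cstar_extreme (I : set X -> A -> H -> H) : Prop :=
  forall (n : nat) (T : 'I_n -> H -> H) (J : 'I_n -> set X -> A -> H -> H),
    (forall i, invertible_op ip (T i)) ->
    (forall i, UCP_instrument (J i)) ->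
    (* sum_i T_i^* T_i = I *)
    (forall h k, \sum_(i < n) ip (T i h) (T i k) = ip h k) ->
    (* I(.) = sum_i T_i^* J_i(.) T_i *)
    (forall E, measurable E -> forall a h k,
       ip h (I E a k) = \sum_(i < n) ip (T i h) (J i E a (T i k))) ->
    exists U : 'I_n -> H -> H, forall i, unitary_op ip (U i) /\
      (* J_i(.) = U_i^* I(.) U_i *)
      (forall E, measurable E -> forall a h k,
         ip h (J i E a k) = ip (U i h) (I E a (U i k))).
End Instruments.
End Defs.

(* Write I(E)(a) = sum_i T_i^* J_i(E)(a) T_i with sum_i T_i^* T_i = 1.  The Kadison-Schwarz
   inequality for the CP maps J_i(E), together with the multiplicativity of I(E), forces
   J_i(E)(a) T_i = T_i I(E)(a).  Since J_i(E) preserves adjoints, T_i^* T_i then commutes with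
   every I(E)(a), hence so does its square root |T_i|, and U_i = |T_i| T_i^-1 is a unitary
   with U_i^* I(E)(a) U_i = T_i I(E)(a) T_i^-1 = J_i(E)(a).
   Adjoints are provided by the Riesz representation theorem, and |T| = 1 - Y where Y is the
   limit of the iteration Y_(k+1) = (1 - T^* T + Y_k^2) / 2, which converges geometrically
   because T is invertible and T^* T <= 1. *)

From HB Require Import structures.
From mathcomp Require Import all_boot all_order all_algebra.
From mathcomp Require Import complex.
From mathcomp Require Import classical_sets reals measure boolp.
From mathcomp Require Import ring lra.

Set Implicit Arguments.
Unset Strict Implicit.
Unset Printing Implicit Defensive.

Import Order.TTheory GRing.Theory Num.Theory.
Local Open Scope ring_scope.

Section ComplexExtra.
Variable R : realType.
Local Notation C := R[i].
Local Notation Re := (@complex.Re R).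
Local Notation Im := (@complex.Im R).

Lemma complex_ext (z w : C) : Re z = Re w -> Im z = Im w -> z = w.
Proof. by case: z => a b; case: w => c d /= -> ->. Qed.

Lemma cReJ (z : C) : Re z^* = Re z. Proof. by case: z. Qed.
Lemma cImJ (z : C) : Im z^* = - Im z. Proof. by case: z. Qed.
Lemma cReM (z w : C) : Re (z * w) = Re z * Re w - Im z * Im w.
Proof. by case: z; case: w. Qed.
Lemma cImM (z w : C) : Im (z * w) = Re z * Im w + Im z * Re w.
Proof. by case: z => a b; case: w => c d /=. Qed.

Lemma ge0_cRe (z : C) : 0 <= z -> 0 <= Re z.
Proof. by rewrite lecE => /andP[]. Qed.
Lemma gt0_cRe (z : C) : 0 < z -> 0 < Re z.
Proof. by rewrite ltcE => /andP[]. Qed.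
Lemma ge0_cReE (z : C) : 0 <= z -> z = (Re z)%:C%C.
Proof. by move=> z0; rewrite RRe_real // ger0_real. Qed.
Lemma conjR (r : R) : (r%:C%C)^* = r%:C%C :> C.
Proof. exact: conjc_real. Qed.

Definition sqmod (z : C) : R := Re z ^+ 2 + Im z ^+ 2.

Lemma sqmod_ge0 z : 0 <= sqmod z.
Proof. by rewrite addr_ge0 ?sqr_ge0. Qed.
Lemma mulcJ_sqmod z : z * z^* = (sqmod z)%:C%C.
Proof. by apply: complex_ext; rewrite ?cReM ?cImM cReJ cImJ /sqmod /=; ring. Qed.
Lemma mulJc_sqmod z : z^* * z = (sqmod z)%:C%C.
Proof. by rewrite mulrC mulcJ_sqmod. Qed.
Lemma sqmod_eq0 z : sqmod z = 0 -> z = 0.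
Proof.
rewrite /sqmod => z0; have re0 : Re z = 0 by nra.
have im0 : Im z = 0 by nra.
exact: complex_ext.
Qed.
Lemma sqmodM z w : sqmod (z * w) = sqmod z * sqmod w.
Proof. by rewrite /sqmod cReM cImM; ring. Qed.
Lemma sqmodJ z : sqmod z^* = sqmod z.
Proof. by rewrite /sqmod cReJ cImJ sqrrN. Qed.
Lemma sqmodN z : sqmod (- z) = sqmod z.
Proof. by rewrite /sqmod !raddfN /= !sqrrN. Qed.
Lemma sqmodR (r : R) : sqmod r%:C%C = r ^+ 2.
Proof. by rewrite /sqmod /= expr0n addr0. Qed.
Lemma sqmodD_le z w : sqmod (z + w) <= 2 * sqmod z + 2 * sqmod w.
Proof.
rewrite /sqmod !raddfD /=.
have := sqr_ge0 (Re z - Re w); have := sqr_ge0 (Im z - Im w); nra.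
Qed.
End ComplexExtra.

Section InnerProduct.
Variable R : realType.
Local Notation C := R[i].
Local Notation Re := (@complex.Re R).
Local Notation Im := (@complex.Im R).
Variables (H : lmodType C) (ip : H -> H -> C).
Hypothesis hH : hilbert_space ip.

Lemma ipDZr c x y z : ip x (c *: y + z) = c * ip x y + ip x z.
Proof. by case: hH. Qed.
Lemma ipC x y : ip y x = (ip x y)^*.
Proof. by case: hH. Qed.
Lemma ip_ge0 x : 0 <= ip x x.
Proof. by case: hH. Qed.
Lemma ip_eq0 x : ip x x = 0 -> x = 0.
Proof. by case: hH => _ _ _ + _; apply. Qed.

Lemma ip0r x : ip x 0 = 0.
Proof.
have /eqP := ipDZr 1 x 0 0; rewrite scaler0 addr0 mul1r addrC -subr_eq subrr eq_sym.
by move/eqP.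
Qed.
Lemma ipDr x y z : ip x (y + z) = ip x y + ip x z.
Proof. by have := ipDZr 1 x y z; rewrite scale1r mul1r. Qed.
Lemma ipZr c x y : ip x (c *: y) = c * ip x y.
Proof. by have := ipDZr c x y 0; rewrite !addr0 ip0r addr0. Qed.
Lemma ipNr x y : ip x (- y) = - ip x y.
Proof. by rewrite -scaleN1r ipZr mulN1r. Qed.
Lemma ipBr x y z : ip x (y - z) = ip x y - ip x z.
Proof. by rewrite ipDr ipNr. Qed.
Lemma ipDl x y z : ip (y + z) x = ip y x + ip z x.
Proof. by rewrite ipC ipDr rmorphD /= -!ipC. Qed.
Lemma ipZl c x y : ip (c *: y) x = c^* * ip y x.
Proof. by rewrite ipC ipZr rmorphM /= -ipC. Qed.
Lemma ip0l x : ip 0 x = 0.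
Proof. by rewrite ipC ip0r rmorph0. Qed.
Lemma ipNl x y : ip (- y) x = - ip y x.
Proof. by rewrite ipC ipNr rmorphN /= -ipC. Qed.
Lemma ipBl x y z : ip (y - z) x = ip y x - ip z x.
Proof. by rewrite ipDl ipNl. Qed.

Lemma ip_ext a b : (forall x, ip x a = ip x b) -> a = b.
Proof.
by move=> eq_ab; apply/eqP; rewrite -subr_eq0; apply/eqP/ip_eq0; rewrite ipBr eq_ab subrr.
Qed.

Definition nrm2 x : R := Re (ip x x).

Lemma ip_nrm2 x : ip x x = (nrm2 x)%:C%C.
Proof. exact/ge0_cReE/ip_ge0. Qed.
Lemma nrm2_ge0 x : 0 <= nrm2 x.
Proof. exact/ge0_cRe/ip_ge0. Qed.
Lemma nrm2_eq0 x : nrm2 x = 0 -> x = 0.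
Proof. by move=> x0; apply: ip_eq0; rewrite ip_nrm2 x0. Qed.
Lemma nrm20 : nrm2 0 = 0.
Proof. by rewrite /nrm2 ip0r. Qed.
Lemma Re_ipC x y : Re (ip y x) = Re (ip x y).
Proof. by rewrite ipC cReJ. Qed.
Lemma nrm2D x y : nrm2 (x + y) = nrm2 x + nrm2 y + 2 * Re (ip x y).
Proof. by rewrite /nrm2 ipDl !ipDr !raddfD /= (Re_ipC x y); ring. Qed.
Lemma nrm2N x : nrm2 (- x) = nrm2 x.
Proof. by rewrite /nrm2 ipNl ipNr opprK. Qed.
Lemma nrm2B x y : nrm2 (x - y) = nrm2 x + nrm2 y - 2 * Re (ip x y).
Proof. by rewrite nrm2D nrm2N ipNr raddfN /=; ring. Qed.
Lemma nrm2Z c x : nrm2 (c *: x) = sqmod c * nrm2 x.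
Proof. by rewrite /nrm2 ipZl ipZr mulrA mulJc_sqmod ip_nrm2 -rmorphM. Qed.
Lemma nrm2D_le x y : nrm2 (x + y) <= 2 * nrm2 x + 2 * nrm2 y.
Proof. by have := nrm2_ge0 (x - y); rewrite nrm2B nrm2D; lra. Qed.

Lemma Re_ip_sqr_le x y : Re (ip x y) ^+ 2 <= nrm2 x * nrm2 y.
Proof.
have [y0|/negbTE ny0] := eqVneq (nrm2 y) 0.
  by rewrite y0 (nrm2_eq0 y0) ip0r mulr0 expr0n.
have yp : 0 < nrm2 y by rewrite lt_def ny0 nrm2_ge0.
set a := Re (ip x y).
(* the quadratic [t |-> nrm2 (x - t y)] is nonnegative at its minimum [t = a / nrm2 y] *)
have := nrm2_ge0 (x - (a / nrm2 y)%:C%C *: y).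
rewrite nrm2B nrm2Z ipZr sqmodR cReM /= mul0r subr0.
have -> : nrm2 x + (a / nrm2 y) ^+ 2 * nrm2 y - 2 * (a / nrm2 y * a) =
          (nrm2 x * nrm2 y - a ^+ 2) / nrm2 y by field; rewrite ny0.
by rewrite pmulr_lge0 ?invr_gt0 // subr_ge0.
Qed.

Lemma Cauchy_Schwarz x y : sqmod (ip x y) <= nrm2 x * nrm2 y.
Proof.
have := Re_ip_sqr_le x ((ip x y)^* *: y).
rewrite ipZr mulrC mulcJ_sqmod nrm2Z sqmodJ /= => h.
have [->|nz] := eqVneq (sqmod (ip x y)) 0; first by rewrite mulr_ge0 ?nrm2_ge0.
have zp : 0 < sqmod (ip x y) by rewrite lt_def nz sqmod_ge0.
by rewrite -(ler_pM2l zp) -expr2 mulrCA.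
Qed.

Definition nrm x : R := Num.sqrt (nrm2 x).

Lemma nrm_ge0 x : 0 <= nrm x. Proof. exact: sqrtr_ge0. Qed.
Lemma nrm_sqr x : nrm x ^+ 2 = nrm2 x. Proof. by rewrite sqr_sqrtr // nrm2_ge0. Qed.
Lemma nrm0 : nrm 0 = 0. Proof. by rewrite /nrm nrm20 sqrtr0. Qed.
Lemma nrmN x : nrm (- x) = nrm x. Proof. by rewrite /nrm nrm2N. Qed.
Lemma nrm_le x c : 0 <= c -> (nrm x <= c) = (nrm2 x <= c ^+ 2).
Proof. by move=> c0; rewrite -nrm_sqr ler_pXn2r ?nnegrE ?nrm_ge0. Qed.
Lemma nrm_lt x c : 0 <= c -> (nrm x < c) = (nrm2 x < c ^+ 2).
Proof. by move=> c0; rewrite -nrm_sqr ltr_pXn2r ?nnegrE ?nrm_ge0. Qed.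
Lemma nrmZR (r : R) x : nrm (r%:C%C *: x) = `|r| * nrm x.
Proof. by rewrite /nrm nrm2Z sqmodR sqrtrM ?sqr_ge0 // sqrtr_sqr. Qed.

Lemma nrm_le_sqrt (q : R) x y : 0 <= q -> nrm2 y <= q * nrm2 x ->
  nrm y <= Num.sqrt q * nrm x.
Proof.
by move=> q0 yx; rewrite nrm_le ?mulr_ge0 ?sqrtr_ge0 ?nrm_ge0 // exprMn sqr_sqrtr // nrm_sqr.
Qed.

Lemma nrmD_le x y : nrm (x + y) <= nrm x + nrm y.
Proof.
have xy0 : 0 <= nrm x * nrm y by rewrite mulr_ge0 ?nrm_ge0.
have Re_le : Re (ip x y) <= nrm x * nrm y.
  have := Re_ip_sqr_le x y; rewrite -!nrm_sqr -exprMn.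
  case: (lerP (Re (ip x y)) 0) => [r0 _|r0 sq_le]; first exact: le_trans xy0.
  by rewrite -(ler_pXn2r (n := 2)) // ?nnegrE ?ltW.
rewrite nrm_le ?addr_ge0 ?nrm_ge0 // nrm2D -!nrm_sqr; nra.
Qed.
Lemma nrmB_le x y : nrm (x - y) <= nrm x + nrm y.
Proof. by rewrite -(nrmN y) nrmD_le. Qed.

End InnerProduct.

Section Operators.
Variable R : realType.
Local Notation C := R[i].
Variables (H : lmodType C) (ip : H -> H -> C).
Hypothesis hH : hilbert_space ip.
Local Notation nrm2 := (nrm2 ip).

Definition linop (T : H -> H) := forall (c : C) x y, T (c *: x + y) = c *: T x + T y.
Definition op_bound (T : H -> H) (M : R) := forall x, nrm2 (T x) <= M * nrm2 x.

Section Linop.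
Variable T : H -> H.
Hypothesis linT : linop T.

Lemma linop0 : T 0 = 0.
Proof.
have /eqP := linT 1 0 0; rewrite scaler0 addr0 scale1r addrC -subr_eq subrr eq_sym.
by move/eqP.
Qed.
Lemma linopD x y : T (x + y) = T x + T y.
Proof. by have := linT 1 x y; rewrite !scale1r. Qed.
Lemma linopZ c x : T (c *: x) = c *: T x.
Proof. by have := linT c x 0; rewrite !addr0 linop0 addr0. Qed.
Lemma linopN x : T (- x) = - T x.
Proof. by rewrite -scaleN1r linopZ scaleN1r. Qed.
Lemma linopB x y : T (x - y) = T x - T y.
Proof. by rewrite linopD linopN. Qed.
End Linop.

Lemma linopP (T : H -> H) : {morph T : x y / x + y} ->
  (forall (c : C) x, T (c *: x) = c *: T x) -> linop T.
Proof. by move=> TD TZ c x y; rewrite TD TZ. Qed.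
Lemma linop_comp S T : linop S -> linop T -> linop (S \o T).
Proof. by move=> linS linT c x y /=; rewrite linT linS. Qed.
Lemma op_bound_comp S T M1 M2 :
  0 <= M1 -> op_bound S M1 -> op_bound T M2 -> op_bound (S \o T) (M1 * M2).
Proof. by move=> M10 bS bT x /=; rewrite (le_trans (bS _)) // -mulrA ler_wpM2l. Qed.

Lemma bounded_opP T :
  bounded_op ip T -> linop T /\ exists2 M : R, 0 <= M & op_bound T M.
Proof.
case=> linT [M [M0 bT]]; split => //; exists (complex.Re M); first exact: ge0_cRe.
by move=> x; have := bT x; rewrite !(ip_nrm2 hH) (ge0_cReE M0) -rmorphM lecR.
Qed.
Lemma bounded_opI T M : linop T -> 0 <= M -> op_bound T M -> bounded_op ip T.
Proof.
move=> linT M0 bT; split => //; exists M%:C%C; split; first by rewrite lecR.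
by move=> x; rewrite !(ip_nrm2 hH) -rmorphM lecR.
Qed.
End Operators.

Section Convergence.
Variable R : realType.
Local Notation C := R[i].
Variables (H : lmodType C) (ip : H -> H -> C).
Hypothesis hH : hilbert_space ip.
Local Notation nrm2 := (nrm2 ip).
Local Notation nrm := (nrm ip).

Definition hcvg (u : nat -> H) (x : H) :=
  forall e : R, 0 < e -> exists N, forall n, (N <= n)%N -> nrm2 (u n - x) < e.
Definition hcauchy (u : nat -> H) :=
  forall e : R, 0 < e -> exists N, forall m n, (N <= m)%N -> (N <= n)%N ->
    nrm2 (u m - u n) < e.
Definition ccvg (a : nat -> C) (l : C) :=
  forall e : R, 0 < e -> exists N, forall n, (N <= n)%N -> sqmod (a n - l) < e.

Lemma hilbert_complete u : hcauchy u -> exists x, hcvg u x.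
Proof.
move=> cau_u; case: hH => _ _ _ _ /(_ u) [e e_gt0|x ux].
  have [N uN] := cau_u _ (gt0_cRe e_gt0).
  exists N => m n mN nN; rewrite (ip_nrm2 hH) (ge0_cReE (ltW e_gt0)) ltcR.
  exact: uN.
exists x => e e_gt0; have [|N uN] := ux e%:C%C; first by rewrite ltcR.
by exists N => n nN; move: (uN n nN); rewrite (ip_nrm2 hH) ltcR.
Qed.

Lemma hcvg_unique u x y : hcvg u x -> hcvg u y -> x = y.
Proof.
move=> ux uy; apply/eqP; rewrite -subr_eq0; apply/eqP/(nrm2_eq0 hH).
apply/le_anti; rewrite nrm2_ge0 // andbT; apply/ler_addgt0Pr => e e_gt0.
have [N1 uN1] := ux (e / 4) ltac:(lra); have [N2 uN2] := uy (e / 4) ltac:(lra).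
have := uN1 _ (leq_maxl N1 N2); have := uN2 _ (leq_maxr N1 N2).
set v := u _ => vy vx.
have -> : x - y = (v - y) + - (v - x) by rewrite opprB [RHS]addrC [RHS]addrA subrK.
by rewrite (le_trans (nrm2D_le hH _ _)) // (nrm2N hH); lra.
Qed.

Lemma hcvg_ext u v x : u =1 v -> hcvg u x -> hcvg v x.
Proof. by move=> uv ux e /ux [N uN]; exists N => n /uN; rewrite uv. Qed.
Lemma hcvg_cst x : hcvg (fun=> x) x.
Proof. by move=> e e_gt0; exists 0%N => n _; rewrite subrr (nrm20 hH). Qed.
Lemma hcvgS u x : hcvg u x -> hcvg (fun n => u n.+1) x.
Proof. by move=> ux e /ux [N uN]; exists N => n nN; apply/uN/leqW. Qed.

Lemma hcvgD u v x y : hcvg u x -> hcvg v y -> hcvg (fun n => u n + v n) (x + y).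
Proof.
move=> ux vy e e_gt0.
have [N1 uN1] := ux (e / 4) ltac:(lra); have [N2 vN2] := vy (e / 4) ltac:(lra).
exists (maxn N1 N2) => n; rewrite geq_max => /andP[/uN1 un /vN2 vn].
rewrite opprD addrACA (le_lt_trans (nrm2D_le hH _ _)) //; lra.
Qed.

Lemma hcvg_linop T M u x : linop T -> 0 <= M -> op_bound ip T M ->
  hcvg u x -> hcvg (T \o u) (T x).
Proof.
move=> linT M0 bT ux e e_gt0.
have [N uN] := ux (e / (M + 1)) ltac:(apply: divr_gt0; lra).
exists N => n /uN; rewrite ltr_pdivlMr ?ltr_pwDr // => un /=.
rewrite -linopB // (le_lt_trans (bT _)) // (le_lt_trans _ un) // mulrC.
by rewrite ler_wpM2l ?nrm2_ge0 ?lerDl.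
Qed.

Lemma hcvgZ c u x : hcvg u x -> hcvg (fun n => c *: u n) (c *: x).
Proof.
apply: (hcvg_linop (M := sqmod c)); last by move=> y; rewrite (nrm2Z hH).
  by move=> a y z; rewrite scalerDr !scalerA mulrC.
exact: sqmod_ge0.
Qed.

Lemma ccvg_unique a l1 l2 : ccvg a l1 -> ccvg a l2 -> l1 = l2.
Proof.
move=> al1 al2; apply/eqP; rewrite -subr_eq0; apply/eqP/sqmod_eq0.
apply/le_anti; rewrite sqmod_ge0 andbT; apply/ler_addgt0Pr => e e_gt0.
have [N1 aN1] := al1 (e / 4) ltac:(lra); have [N2 aN2] := al2 (e / 4) ltac:(lra).
have := aN1 _ (leq_maxl N1 N2); have := aN2 _ (leq_maxr N1 N2).
set v := a _ => vl2 vl1.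
have -> : l1 - l2 = (v - l2) + - (v - l1) by rewrite opprB [RHS]addrC [RHS]addrA subrK.
by rewrite (le_trans (sqmodD_le _ _)) // sqmodN; lra.
Qed.

Lemma ccvg_ext a b l : a =1 b -> ccvg a l -> ccvg b l.
Proof. by move=> ab al e /al [N aN]; exists N => n /aN; rewrite ab. Qed.

Lemma ccvg_ipr h u x : hcvg u x -> ccvg (fun n => ip h (u n)) (ip h x).
Proof.
move=> ux e e_gt0; have h0 := nrm2_ge0 hH h.
have [N uN] := ux (e / (nrm2 h + 1)) ltac:(apply: divr_gt0; lra).
exists N => n /uN; rewrite ltr_pdivlMr ?ltr_pwDr // => un.
rewrite -(ipBr hH) (le_lt_trans (Cauchy_Schwarz hH _ _)) //.
by have := nrm2_ge0 hH (u n - x); nra.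
Qed.
Lemma ccvg_ipl h u x : hcvg u x -> ccvg (fun n => ip (u n) h) (ip x h).
Proof.
move=> /(ccvg_ipr h) uh e /uh [N uN]; exists N => n /uN.
by rewrite (ipC hH h (u n)) (ipC hH h x) -rmorphB /= sqmodJ.
Qed.

Lemma exists_expr_lt (r e : R) : 0 <= r < 1 -> 0 < e -> exists N, r ^+ N < e.
Proof.
case/andP=> r0 r1 e_gt0; have [->|r_neq0] := eqVneq r 0; first by exists 1%N; rewrite expr1.
have r_gt0 : 0 < r by rewrite lt_def r_neq0.
set t := r^-1 - 1; have t_gt0 : 0 < t by rewrite subr_gt0 invf_gt1.
have Bernoulli n : 1 + n%:R * t <= (1 + t) ^+ n.
  elim: n => [|n IH]; first by rewrite mul0r addr0 expr0.
  rewrite exprS -natr1 mulrDl mul1r.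
  have : 0 <= n%:R * t by rewrite mulr_ge0 ?ler0n ?ltW.
  nra.
have et_gt0 : 0 < e * t by rewrite mulr_gt0.
exists (Num.bound (e * t)^-1); set k := Num.bound _.
have k_gt : (e * t)^-1 < k%:R by rewrite archi_boundP // invr_ge0 ltW.
have rk_gt0 : 0 < r ^+ k by rewrite exprn_gt0.
have tE : 1 + t = r^-1 by rewrite /t addrC subrK.
have := Bernoulli k; rewrite tE exprVn -[X in _ <= X]mul1r ler_pdivlMr // => Bk.
have : 1 < k%:R * (e * t) by rewrite -ltr_pdivrMr // mul1r.
nra.
Qed.

Lemma geometric_sum_le (r : R) m : 0 <= r < 1 -> \sum_(k < m) r ^+ k <= (1 - r)^-1.
Proof.
case/andP=> r0 r1; have r1' : 0 < 1 - r by rewrite subr_gt0.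
have sum_eq : \sum_(k < m) r ^+ k = (1 - r ^+ m) / (1 - r).
  apply: (mulIf (lt0r_neq0 r1')); rewrite divfK ?lt0r_neq0 //.
  by rewrite -[1 - r]opprB mulrN mulrC -subrX1 opprB.
by rewrite sum_eq -[X in _ <= X]mul1r ler_pM2r ?invr_gt0 // gerBl exprn_ge0.
Qed.

Lemma hcauchy_geometric u (K r : R) : 0 <= K -> 0 <= r < 1 ->
  (forall n, nrm (u n.+1 - u n) <= K * r ^+ n) -> hcauchy u.
Proof.
move=> K0 r01 u_geo; have /andP[r0 r1] := r01; have r1' : 0 < 1 - r by rewrite subr_gt0.
have tail n m : nrm (u (n + m)%N - u n) <= K * r ^+ n / (1 - r).
  apply: (@le_trans _ _ (K * r ^+ n * \sum_(k < m) r ^+ k)); last first.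
    by rewrite ler_wpM2l ?mulr_ge0 ?exprn_ge0 ?geometric_sum_le.
  elim: m => [|m IH]; first by rewrite addn0 subrr (nrm0 hH) big_ord0 mulr0.
  rewrite addnS big_ord_recr /= mulrDr -[K * _ * r ^+ m]mulrA -exprD.
  have -> : u (n + m).+1 - u n = (u (n + m).+1 - u (n + m)%N) + (u (n + m)%N - u n).
    by rewrite addrA subrK.
  by rewrite (le_trans (nrmD_le hH _ _)) // addrC lerD.
move=> e e_gt0; set s := Num.sqrt e / 4.
have s_gt0 : 0 < s by rewrite divr_gt0 ?sqrtr_gt0.
have [N rN] : exists N, r ^+ N < s * (1 - r) / (K + 1).
  by apply: exists_expr_lt => //; apply: divr_gt0; [exact: mulr_gt0 | lra].
have near_N p : (N <= p)%N -> nrm (u p - u N) <= s.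
  move=> Np; rewrite -(subnKC Np) (le_trans (tail _ _)) // ler_pdivrMr //.
  rewrite (@le_trans _ _ ((K + 1) * r ^+ N)) ?ler_wpM2r ?exprn_ge0 ?lerDl //.
  by rewrite -ler_pdivlMl ?ltr_pwDr // mulrC ltW.
exists N => m n /near_N um /near_N un.
have -> : u m - u n = (u m - u N) - (u n - u N) by rewrite opprB addrA subrK.
rewrite -(sqr_sqrtr (ltW e_gt0)) -nrm_lt ?sqrtr_ge0 // (le_lt_trans (nrmB_le hH _ _)) //.
by rewrite /s in s_gt0 um un *; lra.
Qed.

Definition limsup_le (a : nat -> R) (c : R) :=
  forall e, 0 < e -> exists N, forall n, (N <= n)%N -> a n <= c + e.

Lemma limsup_le_invn (a : nat -> R) (c : R) :
  (forall n, a n <= c + n.+1%:R^-1) -> limsup_le a c.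
Proof.
move=> a_le e e_gt0; exists (Num.bound e^-1) => n Nn.
rewrite (le_trans (a_le n)) // lerD2l -[e]invrK ltW // ltf_pV2 ?posrE ?invr_gt0 //.
by rewrite (lt_le_trans (archi_boundP _)) ?invr_ge0 ?ltW // ltr_nat ltnS.
Qed.

Lemma hcvg_nrm2_le u x c : 0 <= c -> hcvg u x -> limsup_le (nrm2 \o u) c -> nrm2 x <= c.
Proof.
move=> c0 ux u_le; have s0 := sqrtr_ge0 c; have sc := sqr_sqrtr c0.
rewrite -sc -nrm_le //; apply/ler_addgt0Pr => e e_gt0.
have e2_gt0 : 0 < (e / 2) ^+ 2 by rewrite exprn_gt0 ?divr_gt0.
have [N1 uN1] := ux _ e2_gt0; have [N2 uN2] := u_le _ e2_gt0.
have /uN1 un_x := leq_maxl N1 N2; have /uN2 un := leq_maxr N1 N2.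
set v := u _ in un_x un; have e2_ge0 : 0 <= e / 2 by rewrite divr_ge0 ?ltW.
have v_le : nrm v <= Num.sqrt c + e / 2.
  by rewrite nrm_le ?addr_ge0 // (le_trans un) //; nra.
have x_v : nrm (x - v) < e / 2 by rewrite nrm_lt // -(nrm2N hH) opprB.
by have := nrmD_le hH v (x - v); rewrite addrC subrK; lra.
Qed.
End Convergence.

Section Riesz.
Variable R : realType.
Local Notation C := R[i].
Variables (H : lmodType C) (ip : H -> H -> C).
Hypothesis hH : hilbert_space ip.
Local Notation nrm2 := (nrm2 ip).

Variable g : H -> C.
Hypothesis linear_g : forall (c : C) x y, g (c *: x + y) = c * g x + g y.
Variable M : R.
Hypothesis bounded_g : forall x, sqmod (g x) <= M * nrm2 x.

Lemma lfun0 : g 0 = 0.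
Proof.
have /eqP := linear_g 1 0 0; rewrite scaler0 addr0 mul1r addrC -subr_eq subrr eq_sym.
by move/eqP.
Qed.
Lemma lfunD x y : g (x + y) = g x + g y.
Proof. by have := linear_g 1 x y; rewrite scale1r mul1r. Qed.
Lemma lfunZ c x : g (c *: x) = c * g x.
Proof. by have := linear_g c x 0; rewrite !addr0 lfun0 addr0. Qed.
Lemma lfunB x y : g (x - y) = g x - g y.
Proof. by rewrite -scaleN1r addrC linear_g mulN1r addrC. Qed.

Lemma lfun_ccvg u x : hcvg ip u x -> ccvg (g \o u) (g x).
Proof.
move=> ux e e_gt0; have M1_gt0 : 0 < `|M| + 1 by rewrite ltr_pwDr ?normr_ge0.
have [N uN] := ux (e / (`|M| + 1)) ltac:(exact: divr_gt0).
exists N => n /uN; rewrite ltr_pdivlMr // => un /=.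
rewrite -lfunB (le_lt_trans (bounded_g _)) // (le_lt_trans _ un) // mulrC.
by rewrite ler_wpM2l ?(nrm2_ge0 hH) // (le_trans (ler_norm _)) ?lerDl.
Qed.

Lemma hyperplane_min_orth w : g w = 1 -> (forall x, g x = 1 -> nrm2 w <= nrm2 x) ->
  forall y, g y = 0 -> ip w y = 0.
Proof.
move=> gw w_min y gy; set a := ip w y; set s : R := (nrm2 y + 1)^-1.
have y0 := nrm2_ge0 hH y; have s_gt0 : 0 < s by rewrite invr_gt0; lra.
have sy_lt1 : s * nrm2 y < 1 by rewrite mulrC ltr_pdivrMr; lra.
(* [w - s a^* y] lies in the hyperplane and is shorter than [w] for small [s], unless [a = 0] *)
have := w_min (w - (s%:C%C * a^*) *: y).
rewrite lfunB lfunZ gy mulr0 subr0 => /(_ gw).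
rewrite (nrm2B hH) (nrm2Z hH) (ipZr hH) -mulrA mulJc_sqmod -rmorphM sqmodM sqmodR sqmodJ /=.
rewrite -/a => le_w; have a0 := sqmod_ge0 a.
have : sqmod a * (s * (2 - s * nrm2 y)) <= 0 by nra.
rewrite pmulr_lle0 => [a_le0|]; last by rewrite mulr_gt0 //; lra.
by apply: sqmod_eq0; apply/le_anti; rewrite a_le0 a0.
Qed.

Lemma minimizing_hcauchy (d : R) xs : (forall x, g x = 1 -> d <= nrm2 x) ->
  (forall n, g (xs n) = 1) -> limsup_le (nrm2 \o xs) d -> hcauchy ip xs.
Proof.
move=> d_le gxs xs_d e e_gt0; have [N xsN] := xs_d (e / 8) ltac:(lra).
exists N => m n /xsN /= xm /xsN /= xn.
have mid : g ((2^-1 : R)%:C%C *: (xs m + xs n)) = 1.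
  rewrite lfunZ lfunD !gxs mulrDr mulr1 -rmorphD.
  by rewrite (_ : 2^-1 + 2^-1 = 1 :> R) ?rmorph1 //; field.
have := d_le _ mid; rewrite (nrm2Z hH) sqmodR.
by have := nrm2D hH (xs m) (xs n); have := nrm2B hH (xs m) (xs n); lra.
Qed.

Lemma hyperplane_min_exists x1 : g x1 = 1 ->
  exists2 w, g w = 1 & forall x, g x = 1 -> nrm2 w <= nrm2 x.
Proof.
move=> gx1; pose E : set R := fun r => exists2 x, g x = 1 & r = nrm2 x.
have E_inf : has_inf E.
  by split; [exists (nrm2 x1), x1 | exists 0 => _ [x _ ->]; apply: nrm2_ge0].
have inf_le x : g x = 1 -> inf E <= nrm2 x by move=> gx; apply: (ge_inf E_inf.2); exists x.
have inf_ge0 : 0 <= inf E.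
  by apply: lb_le_inf; [exists (nrm2 x1), x1 | move=> _ [x _ ->]; apply: nrm2_ge0].
have near_inf n : exists x, g x = 1 /\ nrm2 x <= inf E + n.+1%:R^-1.
  have n_gt0 : 0 < n.+1%:R^-1 :> R by rewrite invr_gt0 ltr0Sn.
  have [_ [x gx ->] /ltW x_le] := inf_adherent n_gt0 E_inf.
  by exists x.
pose xs n := sval (cid (near_inf n)).
have xs_inf n : g (xs n) = 1 /\ nrm2 (xs n) <= inf E + n.+1%:R^-1.
  exact: svalP (cid (near_inf n)).
have gxs n : g (xs n) = 1 by case: (xs_inf n).
have xs_lim : limsup_le (nrm2 \o xs) (inf E) by apply: limsup_le_invn => n; case: (xs_inf n).
have [w xs_w] := hilbert_complete hH (minimizing_hcauchy inf_le gxs xs_lim).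
have gw : g w = 1.
  apply: ccvg_unique (lfun_ccvg xs_w) _ => e e_gt0.
  by exists 0%N => n _ /=; rewrite gxs subrr /sqmod /= expr0n addr0.
have w_le : nrm2 w <= inf E := hcvg_nrm2_le hH inf_ge0 xs_w xs_lim.
by exists w => // x /inf_le; apply: le_trans w_le.
Qed.

Lemma Riesz_representation : exists z, forall x, g x = ip z x.
Proof.
have [[x0 gx0]|g0] := pselect (exists x, g x != 0); last first.
  exists 0 => x; rewrite (ip0l hH); apply/eqP/negPn/negP => gx.
  by apply: g0; exists x.
have [w gw w_min] := @hyperplane_min_exists ((g x0)^-1 *: x0) ltac:(by rewrite lfunZ mulVf).
have w0 : nrm2 w != 0.
  by apply: contra_neq (oner_neq0 C) => /(nrm2_eq0 hH) w0; rewrite -gw w0 lfun0.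
exists ((nrm2 w)^-1%:C%C *: w) => x.
have ker_x : g (x - g x *: w) = 0 by rewrite lfunB lfunZ gw mulr1 subrr.
have := hyperplane_min_orth gw w_min ker_x; rewrite (ipBr hH) (ipZr hH) (ip_nrm2 hH) => /eqP.
rewrite subr_eq0 (ipZl hH) conjR => /eqP ->; rewrite mulrCA -rmorphM.
by rewrite mulVf // mulr1.
Qed.
End Riesz.

Section Adjoint.
Variable R : realType.
Local Notation C := R[i].
Variables (H : lmodType C) (ip : H -> H -> C).
Hypothesis hH : hilbert_space ip.
Local Notation nrm2 := (nrm2 ip).

Section AdjointOf.
Variables T T' : H -> H.
Hypothesis T_adj : forall x y, ip (T x) y = ip x (T' y).

Lemma adjoint_linop : linop T'.
Proof. by move=> c y y'; apply: (ip_ext hH) => x; rewrite -T_adj !(ipDZr hH) !T_adj. Qed.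

Lemma adjoint_op_bound M : 0 <= M -> op_bound ip T M -> op_bound ip T' M.
Proof.
move=> M0 bT y; have := Cauchy_Schwarz hH (T (T' y)) y.
rewrite T_adj (ip_nrm2 hH) sqmodR.
have := bT (T' y); have := nrm2_ge0 hH (T' y); have := nrm2_ge0 hH y => y0 z0 Tz CS.
have [->|z_neq0] := eqVneq (nrm2 (T' y)) 0; first by rewrite mulr_ge0.
have z_gt0 : 0 < nrm2 (T' y) by rewrite lt_def z_neq0.
rewrite -(ler_pM2r z_gt0); rewrite expr2 in CS; nra.
Qed.
End AdjointOf.

Lemma adjoint_exists T M : linop T -> op_bound ip T M ->
  exists T', forall x y, ip (T x) y = ip x (T' y).
Proof.
move=> linT bT.
have rep y : exists z, forall x, ip (T x) y = ip x z.
  have lin_y c x x' : ip y (T (c *: x + x')) = c * ip y (T x) + ip y (T x').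
    by rewrite linT (ipDZr hH).
  have bnd_y x : sqmod (ip y (T x)) <= (nrm2 y * M) * nrm2 x.
    rewrite (le_trans (Cauchy_Schwarz hH _ _)) // -mulrA.
    by rewrite ler_wpM2l ?(nrm2_ge0 hH).
  have [z yz] := Riesz_representation hH lin_y bnd_y.
  by exists z => x; rewrite (ipC hH) yz -(ipC hH).
by exists (fun y => sval (cid (rep y))) => x y; case: cid.
Qed.
End Adjoint.

Section CompletelyPositive.
Variable R : realType.
Local Notation C := R[i].
Local Notation Re := (@complex.Re R).
Local Notation Im := (@complex.Im R).
Variables (A : algType C) (star : A -> A) (nA : A -> C).
Hypothesis hA : unital_Cstar_algebra star nA.
Variables (H : lmodType C) (ip : H -> H -> C).
Hypothesis hH : hilbert_space ip.
Local Notation nrm2 := (nrm2 ip).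

Lemma starK a : star (star a) = a. Proof. by case: hA => -[]. Qed.
Lemma star1 : star 1 = 1.
Proof. by case: hA => -[_ _ _ /(_ (star 1) 1)]; rewrite mulr1 !starK mulr1 => <-. Qed.

Variable phi : A -> H -> H.
Hypothesis CP_phi : CP_map star ip phi.

Lemma CP_linop a : linop (phi a).
Proof. by case: CP_phi => _ /(_ a) []. Qed.

(* positivity of [phi] on the 2 x 2 matrix [[a^* a, a^*]; [a, 1]] = y^* y, y = [[a, 1]; [0, 0]] *)
Lemma CP_psd2 a h0 h1 :
  0 <= ip h0 (phi (star a * a) h0) + ip h0 (phi (star a) h1)
       + ip h1 (phi a h0) + ip h1 (phi 1 h1).
Proof.
case: CP_phi => _ _ /(_ 2%N) CP2.
pose y0 : 'I_2 -> A := fun i => if i == ord0 then a else 1.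
pose y : 'I_2 -> 'I_2 -> A := fun k i => if k == ord0 then y0 i else 0.
have psd : posM star (fun i j => star (y0 i) * y0 j).
  by exists y => i j; rewrite big_ord_recl big_ord1 /y /= mulr0 addr0.
have := CP2 _ psd (fun i => if i == ord0 then h0 else h1).
by rewrite !big_ord_recl !big_ord0 /y0 /= star1 !mulr1 !mul1r !addr0 addrA.
Qed.

Lemma CP_ge0 a h : 0 <= ip h (phi (star a * a) h).
Proof.
have := CP_psd2 a h 0.
by rewrite (linop0 (CP_linop _)) (ip0r hH) !(ip0l hH) !addr0.
Qed.

Lemma CP_conj a h0 h1 : ip h1 (phi a h0) = (ip h0 (phi (star a) h1))^*.
Proof.
set u := ip h0 (phi (star a) h1); set v := ip h1 (phi a h0).
have p_re : Im (ip h0 (phi (star a * a) h0)) = 0 by apply/ger0_Im/CP_ge0.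
have w_re : Im (ip h1 (phi 1 h1)) = 0.
  by apply: ger0_Im; have := CP_ge0 1 h1; rewrite star1 mulr1.
(* [CP_psd2] with [h1] replaced by [c h1]: the imaginary part must vanish for every [c] *)
have Im_c c : Re c * Im u + Im c * Re u + (Re c * Im v - Im c * Re v) = 0.
  have := ger0_Im (CP_psd2 a h0 (c *: h1)).
  rewrite (linopZ (CP_linop _)) (linopZ (CP_linop _)) !(ipZr hH) !(ipZl hH).
  rewrite -/u -/v mulrA mulcJ_sqmod !raddfD /= !cImM cReJ cImJ p_re w_re /=.
  lra.
have := Im_c 1; have := Im_c 'i; rewrite /= => c_i c_1.
by apply: complex_ext; rewrite ?cReJ ?cImJ; lra.
Qed.

Lemma CP_adjoint a x y : ip x (phi a y) = ip (phi (star a) x) y.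
Proof. by rewrite CP_conj (ipC hH y). Qed.

Lemma Kadison_Schwarz a h : (forall x, Re (ip x (phi 1 x)) <= nrm2 x) ->
  nrm2 (phi a h) <= Re (ip h (phi (star a * a) h)).
Proof.
move=> phi1_le; set v := phi a h; have := ge0_cRe (CP_psd2 a h (- v)).
rewrite (linopN (CP_linop _)) (linopN (CP_linop _)) !(ipNr hH) !(ipNl hH) opprK.
rewrite (CP_adjoint (star a) h v) starK -/v !raddfD !raddfN /= -/(nrm2 v).
by have := phi1_le v; lra.
Qed.
End CompletelyPositive.

Section ComplexMeasure.
Local Open Scope classical_set_scope.
Variable R : realType.
Local Notation C := R[i].
Variables (d : measure_display) (X : measurableType d).
Variable mu : set X -> C.
Hypothesis mu_cadd : countably_additive mu.

Lemma series_to_unique (u : nat -> C) l1 l2 : series_to u l1 -> series_to u l2 -> l1 = l2.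
Proof.
move=> ul1 ul2; apply/eqP; apply: contraT => l12; have e_gt0 : 0 < `|l1 - l2| / 2.
  by rewrite divr_gt0 ?normr_gt0 ?subr_eq0.
have [N1 uN1] := ul1 _ e_gt0; have [N2 uN2] := ul2 _ e_gt0.
have := uN1 _ (leq_maxl N1 N2); have := uN2 _ (leq_maxr N1 N2).
set s := \sum_(i < _) _ => s2 s1.
have tri : `|l1 - l2| <= `|s - l1| + `|s - l2|.
  have -> : l1 - l2 = (s - l2) - (s - l1) by rewrite opprB [RHS]addrC [RHS]addrA subrK.
  by rewrite (le_trans (ler_normB _ _)) // addrC.
by have := le_lt_trans tri (ltrD s1 s2); rewrite -splitr ltxx.
Qed.

Lemma cadditive0 : mu set0 = 0.
Proof.
have := mu_cadd (fun=> measurable0) (@trivIset_set0 nat X setT).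
rewrite bigcup0 // => mu_sum; apply/eqP; apply: contraT => mu0.
have [N /(_ N.+2 (leqW (leqnSn N)))] := mu_sum _ (eqbRL (normr_gt0 _) mu0).
rewrite sumr_const card_ord mulrSr addrK normrMn mulrS => lt_mu.
have le_mu : `|mu set0| <= `|mu set0| + `|mu set0| *+ N by rewrite lerDl mulrn_wge0.
by have := lt_le_trans lt_mu le_mu; rewrite ltxx.
Qed.

Lemma cadditiveC E : measurable E -> mu E + mu (~` E) = mu setT.
Proof.
move=> mE; pose F n := if n is 0%N then E else if n is 1%N then ~` E else set0.
have mF n : measurable (F n) by case: n => [|[|n]] //=; apply: measurableC.
have tF : trivIset setT F by move=> [|[|i]] [|[|j]] _ _ //= [x []].
have UF : \bigcup_n F n = setT.
  by apply/seteqP; split => // x _; case: (pselect (E x)) => Ex; [exists 0%N | exists 1%N].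
have := mu_cadd mF tF; rewrite UF => mu_sum.
apply: series_to_unique mu_sum => e e_gt0.
exists 2%N => n n2; rewrite -(subnKC n2) big_split_ord /= !big_ord_recl big_ord0.
by rewrite big1 ?addr0 ?subrr ?normr0 // => i _; rewrite cadditive0.
Qed.
End ComplexMeasure.

Section Intertwining.
Variable R : realType.
Local Notation C := R[i].
Local Notation Re := (@complex.Re R).
Variables (d : measure_display) (X : measurableType d).
Variables (A : algType C) (star : A -> A) (nA : A -> C).
Hypothesis hA : unital_Cstar_algebra star nA.
Variables (H : lmodType C) (ip : H -> H -> C).
Hypothesis hH : hilbert_space ip.
Local Notation nrm2 := (nrm2 ip).

Lemma UCP_instrument_CP (J : set X -> A -> H -> H) E :
  UCP_instrument star ip J -> measurable E -> CP_map star ip (J E).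
Proof. by case=> -[+ _] _; apply. Qed.

Lemma UCP_instrument_le1 (J : set X -> A -> H -> H) E :
  UCP_instrument star ip J -> measurable E -> forall x, Re (ip x (J E 1 x)) <= nrm2 x.
Proof.
move=> UCP_J mE x; have [[_ J_cadd] J1] := UCP_J.
have := cadditiveC (J_cadd 1 x x) mE; rewrite J1 => J_split.
have := CP_ge0 hA hH (UCP_instrument_CP UCP_J (measurableC mE)) 1 x.
by rewrite (star1 hA) mulr1 => /ge0_cRe; rewrite /nrm2 -J_split raddfD /=; lra.
Qed.

Variables (I : set X -> A -> H -> H) (n : nat).
Variables (T : 'I_n -> H -> H) (J : 'I_n -> set X -> A -> H -> H).
Hypothesis spectral_I : spectral_instrument star ip I.
Hypothesis UCP_J : forall i, UCP_instrument star ip (J i).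
Hypothesis sum_TT : forall h k, \sum_(i < n) ip (T i h) (T i k) = ip h k.
Hypothesis I_decomp : forall E, measurable E -> forall a h k,
  ip h (I E a k) = \sum_(i < n) ip (T i h) (J i E a (T i k)).

(* With [x_i = J_i(a) T_i h] and [y_i = T_i I(a) h], Kadison-Schwarz and multiplicativity of
   [I] give [sum |x_i|^2 <= |I(a) h|^2 = sum |y_i|^2 = sum Re <x_i, y_i>], so all [x_i = y_i]. *)
Lemma instrument_intertwine E : measurable E ->
  forall i a h, J i E a (T i h) = T i (I E a h).
Proof.
move=> mE i0 a h; have [_ /(_ E mE) [_ _ I_mul I_adj]] := spectral_I.
set v := I E a h; pose x i := J i E a (T i h); pose y i := T i v.
have x_le i : nrm2 (x i) <= Re (ip (T i h) (J i E (star a * a) (T i h))).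
  by apply: (Kadison_Schwarz hA hH (UCP_instrument_CP (UCP_J i) mE)); exact: UCP_instrument_le1.
have sum_x : \sum_(i < n) nrm2 (x i) <= nrm2 v.
  by rewrite (le_trans (ler_sum _ (fun i _ => x_le i))) // -raddf_sum -I_decomp // I_mul -I_adj.
have sum_y : \sum_(i < n) nrm2 (y i) = nrm2 v by rewrite /nrm2 -raddf_sum sum_TT.
have sum_xy : \sum_(i < n) Re (ip (x i) (y i)) = nrm2 v.
  rewrite -raddf_sum /= (eq_bigr (fun i => (ip (y i) (x i))^*)) => [|i _]; last exact: ipC.
  by rewrite -rmorph_sum -I_decomp // cReJ.
have sum_xy0 : \sum_(i < n) nrm2 (x i - y i) = 0.
  apply/le_anti; rewrite sumr_ge0 ?andbT => [|i _]; last exact: nrm2_ge0.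
  under eq_bigr => i _ do rewrite (nrm2B hH).
  by rewrite sumrB big_split /= -mulr_sumr sum_y sum_xy; lra.
have := psumr_eq0P (fun i _ => nrm2_ge0 hH (x i - y i)) sum_xy0 (i := i0) erefl.
by move/(nrm2_eq0 hH)/eqP; rewrite subr_eq0 => /eqP.
Qed.

Lemma instrument_gram_comm E i (T' : H -> H) : measurable E ->
  (forall x y, ip (T i x) y = ip x (T' y)) ->
  forall a x, I E a (T' (T i x)) = T' (T i (I E a x)).
Proof.
move=> mE T_adj a x; have [_ /(_ E mE) [_ _ _ I_adj]] := spectral_I.
have J_adj := CP_adjoint hA hH (UCP_instrument_CP (UCP_J i) mE).
apply: (ip_ext hH) => y; rewrite -T_adj -instrument_intertwine // J_adj.
by rewrite instrument_intertwine // T_adj I_adj (starK hA).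
Qed.

Lemma sum_TT_contraction i : op_bound ip (T i) 1.
Proof.
move=> x; have := congr1 (@complex.Re R) (sum_TT x x); rewrite raddf_sum /= => sum_x.
rewrite mul1r {2}/nrm2 -sum_x (bigD1 i) //= lerDl sumr_ge0 // => j _.
exact: nrm2_ge0.
Qed.
End Intertwining.

Section SquareRoot.
Variable R : realType.
Local Notation C := R[i].
Variables (H : lmodType C) (ip : H -> H -> C).
Hypothesis hH : hilbert_space ip.
Local Notation nrm2 := (nrm2 ip).
Local Notation nrm := (nrm ip).

Variables (B : H -> H) (rho : R).
Hypothesis linB : linop B.
Hypothesis B_sa : forall x y, ip (B x) y = ip x (B y).
Hypothesis rho01 : 0 <= rho < 1.
Hypothesis B_le : forall x, nrm (B x) <= rho * nrm x.

Definition halfC : C := (2^-1 : R)%:C%C.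

(* [Y = (B + Y^2) / 2] is solved by iteration; then [(1 - Y)^2 = 1 - B]. *)
Fixpoint sqrt_iter k x :=
  if k is k'.+1 then halfC *: (B x + sqrt_iter k' (sqrt_iter k' x)) else 0.

(* the smaller fixed point of [t |-> (rho + t^2) / 2] bounds every iterate *)
Definition sqrt_rate : R := 1 - Num.sqrt (1 - rho).

Lemma sqrt_rate01 : 0 <= sqrt_rate < 1.
Proof.
have /andP[rho0 rho1] := rho01.
have s_le1 : Num.sqrt (1 - rho) <= 1 by rewrite -[X in _ <= X]sqrtr1 ler_sqrt; lra.
have s_gt0 : 0 < Num.sqrt (1 - rho) by rewrite sqrtr_gt0; lra.
by apply/andP; rewrite /sqrt_rate; split; lra.
Qed.

Lemma sqrt_rate_fix : 2^-1 * (rho + sqrt_rate * sqrt_rate) = sqrt_rate.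
Proof.
have /andP[rho0 rho1] := rho01.
have s2 : Num.sqrt (1 - rho) ^+ 2 = 1 - rho by rewrite sqr_sqrtr; lra.
rewrite /sqrt_rate; set s := Num.sqrt _ in s2 *.
have -> : rho = 1 - s ^+ 2 by lra.
by field.
Qed.

Lemma nrm_halfC v : nrm (halfC *: v) = 2^-1 * nrm v.
Proof. by rewrite (nrmZR hH) ger0_norm // invr_ge0. Qed.

Lemma sqrt_iter_linop k : linop (sqrt_iter k).
Proof.
elim: k => [|k IH]; first by move=> c x y /=; rewrite scaler0 addr0.
apply: linopP => [x y|c x] /=.
  by rewrite (linopD linB) !(linopD IH) -scalerDr addrACA.
by rewrite (linopZ linB) !(linopZ IH) -scalerDr scalerA mulrC -scalerA.
Qed.

Lemma sqrt_iter_le k x : nrm (sqrt_iter k x) <= sqrt_rate * nrm x.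
Proof.
have /andP[r0 r1] := sqrt_rate01; have /andP[rho0 rho1] := rho01.
elim: k x => [|k IH] x /=; first by rewrite (nrm0 hH) mulr_ge0 ?nrm_ge0.
rewrite nrm_halfC -[X in _ <= X * _]sqrt_rate_fix -mulrA ler_wpM2l ?invr_ge0 //.
have YY := le_trans (IH _) (ler_wpM2l r0 (IH x)).
by have := nrmD_le hH (B x) (sqrt_iter k (sqrt_iter k x)); have := B_le x; nra.
Qed.

Lemma sqrt_iter_nrm2_le k x : nrm2 (sqrt_iter k x) <= nrm2 x.
Proof.
have /andP[r0 r1] := sqrt_rate01.
rewrite -(nrm_sqr hH x) -nrm_le ?nrm_ge0 // (le_trans (sqrt_iter_le k x)) //.
by rewrite ler_piMl ?nrm_ge0 ?ltW.
Qed.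

Lemma sqrt_iter_comm Kop : linop Kop -> (forall x, Kop (B x) = B (Kop x)) ->
  forall k x, Kop (sqrt_iter k x) = sqrt_iter k (Kop x).
Proof.
move=> linK KB; elim=> [|k IH] x /=; first exact: linop0.
by rewrite (linopZ linK) (linopD linK) KB !IH.
Qed.

Lemma sqrt_iterC j k x : sqrt_iter j (sqrt_iter k x) = sqrt_iter k (sqrt_iter j x).
Proof.
apply: sqrt_iter_comm; first exact: sqrt_iter_linop.
by move=> y; rewrite (sqrt_iter_comm linB).
Qed.

Lemma sqrt_iter_sa k x y : ip (sqrt_iter k x) y = ip x (sqrt_iter k y).
Proof.
elim: k x y => [|k IH] x y /=; first by rewrite (ip0l hH) (ip0r hH).
by rewrite (ipZl hH) (ipZr hH) conjR (ipDl hH) (ipDr hH) B_sa !IH.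
Qed.

Lemma sqrt_iterS k x : sqrt_iter k.+1 x = halfC *: (B x + sqrt_iter k (sqrt_iter k x)).
Proof. by []. Qed.

Lemma sqrt_iter_step_le k x :
  nrm (sqrt_iter k.+1 x - sqrt_iter k x) <= nrm x * sqrt_rate ^+ k.
Proof.
have /andP[r0 r1] := sqrt_rate01; have linY := sqrt_iter_linop.
elim: k => [|k IH].
  rewrite subr0 expr0 mulr1 (le_trans (sqrt_iter_le 1 x)) //.
  by rewrite ler_piMl ?nrm_ge0 ?ltW.
set D := sqrt_iter k.+1 x - sqrt_iter k x in IH.
have -> : sqrt_iter k.+2 x - sqrt_iter k.+1 x = halfC *: (sqrt_iter k.+1 D + sqrt_iter k D).
  rewrite {1}(sqrt_iterS k.+1 x) {2}(sqrt_iterS k x) -scalerBr.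
  rewrite !(linopB (linY _)) (sqrt_iterC k k.+1 x); congr (_ *: _).
  by rewrite opprD addrACA subrr add0r addrA subrK.
rewrite nrm_halfC exprS (le_trans (ler_wpM2l _ (nrmD_le hH _ _))) ?invr_ge0 //.
have := sqrt_iter_le k.+1 D; have := sqrt_iter_le k D; have := nrm_ge0 ip D; nra.
Qed.

Lemma sqrt_iter_hcauchy x : hcauchy ip (sqrt_iter^~ x).
Proof.
apply: (hcauchy_geometric hH (nrm_ge0 ip x) sqrt_rate01).
by move=> k; apply: sqrt_iter_step_le.
Qed.

Definition sqrt_lim x := sval (cid (hilbert_complete hH (sqrt_iter_hcauchy x))).

Lemma sqrt_lim_hcvg x : hcvg ip (sqrt_iter^~ x) (sqrt_lim x).
Proof. exact: svalP (cid _). Qed.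

Lemma sqrt_lim_linop : linop sqrt_lim.
Proof.
move=> c x y; apply: (hcvg_unique hH (sqrt_lim_hcvg (c *: x + y))).
apply: hcvg_ext (hcvgD hH (hcvgZ hH c (sqrt_lim_hcvg x)) (sqrt_lim_hcvg y)) => k.
by rewrite (sqrt_iter_linop k).
Qed.

Lemma sqrt_lim_nrm2_le x : nrm2 (sqrt_lim x) <= nrm2 x.
Proof.
apply: (hcvg_nrm2_le hH (nrm2_ge0 hH x) (sqrt_lim_hcvg x)) => e e_gt0.
by exists 0%N => k _; rewrite (le_trans (sqrt_iter_nrm2_le k x)) ?lerDl ?ltW.
Qed.

Lemma sqrt_lim_sa x y : ip (sqrt_lim x) y = ip x (sqrt_lim y).
Proof.
apply: (ccvg_unique (ccvg_ipl hH y (sqrt_lim_hcvg x))).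
by apply: ccvg_ext (ccvg_ipr hH x (sqrt_lim_hcvg y)) => k; rewrite sqrt_iter_sa.
Qed.

Lemma sqrt_lim_comm Kop M : linop Kop -> 0 <= M -> op_bound ip Kop M ->
  (forall x, Kop (B x) = B (Kop x)) -> forall x, Kop (sqrt_lim x) = sqrt_lim (Kop x).
Proof.
move=> linK M0 bK KB x; apply: (hcvg_unique hH (hcvg_linop hH linK M0 bK (sqrt_lim_hcvg x))).
by apply: hcvg_ext (sqrt_lim_hcvg (Kop x)) => k /=; rewrite (sqrt_iter_comm linK KB).
Qed.

Lemma sqrt_iter2_hcvg x : hcvg ip (fun k => sqrt_iter k (sqrt_iter k x)) (sqrt_lim (sqrt_lim x)).
Proof.
move=> e e_gt0.
have [N1 YN1] := @sqrt_lim_hcvg x (e / 4) ltac:(lra).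
have [N2 YN2] := @sqrt_lim_hcvg (sqrt_lim x) (e / 4) ltac:(lra).
exists (maxn N1 N2) => k; rewrite geq_max => /andP[/YN1 Yk1 /YN2 Yk2].
have -> : sqrt_iter k (sqrt_iter k x) - sqrt_lim (sqrt_lim x) =
    sqrt_iter k (sqrt_iter k x - sqrt_lim x) + (sqrt_iter k (sqrt_lim x) - sqrt_lim (sqrt_lim x)).
  by rewrite (linopB (sqrt_iter_linop k)) addrA subrK.
rewrite (le_lt_trans (nrm2D_le hH _ _)) //.
by have := sqrt_iter_nrm2_le k (sqrt_iter k x - sqrt_lim x); lra.
Qed.

Lemma sqrt_lim_fix x : sqrt_lim x + sqrt_lim x = B x + sqrt_lim (sqrt_lim x).
Proof.
have half_fix : sqrt_lim x = halfC *: (B x + sqrt_lim (sqrt_lim x)).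
  apply: (hcvg_unique hH (hcvgS (sqrt_lim_hcvg x))).
  by apply: hcvg_ext (hcvgZ hH halfC (hcvgD hH (hcvg_cst hH (B x)) (sqrt_iter2_hcvg x))).
rewrite {1 2}half_fix -scalerDl -rmorphD /= (_ : 2^-1 + 2^-1 = 1 :> R) ?scale1r //.
by field.
Qed.

Lemma sqrt_exists : exists V : H -> H,
  [/\ linop V, op_bound ip V 4, (forall x y, ip (V x) y = ip x (V y)),
      (forall x, V (V x) = x - B x) &
      forall Kop M, linop Kop -> 0 <= M -> op_bound ip Kop M ->
        (forall x, Kop (B x) = B (Kop x)) -> forall x, Kop (V x) = V (Kop x)].
Proof.
exists (fun x => x - sqrt_lim x); split.
- by move=> c x y; rewrite sqrt_lim_linop scalerBr opprD addrACA.
- move=> x; rewrite (le_trans (nrm2D_le hH _ _)) // (nrm2N hH).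
  by have := sqrt_lim_nrm2_le x; lra.
- by move=> x y; rewrite (ipBl hH) (ipBr hH) sqrt_lim_sa.
- move=> x; rewrite (linopB sqrt_lim_linop) -addrA -opprD addrA sqrt_lim_fix.
  by rewrite addrK.
- move=> Kop M linK M0 bK KB x.
  by rewrite (linopB linK) (sqrt_lim_comm linK M0 bK KB).
Qed.
End SquareRoot.

Section Polar.
Variable R : realType.
Local Notation C := R[i].
Variables (H : lmodType C) (ip : H -> H -> C).
Hypothesis hH : hilbert_space ip.
Local Notation nrm2 := (nrm2 ip).
Local Notation nrm := (nrm ip).

Variables (T S T' S' : H -> H).
Hypotheses (bT : bounded_op ip T) (bS : bounded_op ip S).
Hypotheses (TK : cancel T S) (SK : cancel S T).
Hypothesis T_adj : forall x y, ip (T x) y = ip x (T' y).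
Hypothesis S_adj : forall x y, ip (S x) y = ip x (S' y).
Hypothesis T_le1 : op_bound ip T 1.

Definition gram x := T' (T x).
Definition gram_inv x := S (S' x).

Lemma gram_linop : linop gram.
Proof. by apply: linop_comp; [exact: adjoint_linop T_adj | case: bT]. Qed.

Lemma ip_gram x y : ip x (gram y) = ip (T x) (T y).
Proof. by rewrite T_adj. Qed.

Lemma gramK : cancel gram_inv gram.
Proof. by move=> x; apply: (ip_ext hH) => y; rewrite ip_gram /gram_inv SK -S_adj TK. Qed.

Lemma gram_invK : cancel gram gram_inv.
Proof.
move=> x; apply/eqP; rewrite -subr_eq0; apply/eqP/(nrm2_eq0 hH).
set y := _ - x; have gy : gram y = 0 by rewrite (linopB gram_linop) gramK subrr.
have := ip_gram y y; rewrite gy (ip0r hH) (ip_nrm2 hH) => /esym/complexI/(nrm2_eq0 hH) Ty.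
by rewrite -(TK y) Ty (linop0 (proj1 bS)) (nrm20 hH).
Qed.

(* [T^-1] bounded by [K] gives [|T x|^2 >= |x|^2 / (K + 1)], hence [0 <= 1 - T^*T <= q < 1]. *)
Lemma gram_defect_le : exists2 q : R, 0 <= q < 1 &
  forall x, nrm2 (x - gram x) <= q * nrm2 x.
Proof.
have [linS [K K0 bS']] := bounded_opP hH bS.
have K1_gt0 : 0 < K + 1 by lra.
have iK1_gt0 : 0 < (K + 1)^-1 by rewrite invr_gt0.
have iK1_le1 : (K + 1)^-1 <= 1 by rewrite invf_le1 //; lra.
exists (1 - (K + 1)^-1); first by apply/andP; split; lra.
move=> x; rewrite (nrm2B hH) ip_gram (ip_nrm2 hH) /=.
have Px_le : nrm2 (gram x) <= nrm2 (T x).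
  by rewrite (le_trans (adjoint_op_bound hH T_adj ler01 T_le1 _)) ?mul1r.
have Tx_ge : (K + 1)^-1 * nrm2 x <= nrm2 (T x).
  rewrite ler_pdivrMl // (le_trans _ (_ : K * nrm2 (T x) <= _)) //.
    by rewrite -{1}(TK x) bS'.
  by rewrite ler_wpM2r ?(nrm2_ge0 hH) ?lerDl.
lra.
Qed.

Lemma gram_sa x y : ip (gram x) y = ip x (gram y).
Proof. by rewrite ip_gram (ipC hH) ip_gram -(ipC hH). Qed.

Lemma abs_exists : exists V : H -> H,
  [/\ linop V, op_bound ip V 4, (forall x y, ip (V x) y = ip x (V y)),
      (forall x, V (V x) = gram x) &
      forall Kop M, linop Kop -> 0 <= M -> op_bound ip Kop M ->
        (forall x, Kop (gram x) = gram (Kop x)) -> forall x, Kop (V x) = V (Kop x)].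
Proof.
have [q /andP[q0 q1] defect_le] := gram_defect_le.
have linB : linop (fun x => x - gram x).
  by move=> c x y; rewrite gram_linop scalerBr opprD addrACA.
have B_sa x y : ip (x - gram x) y = ip x (y - gram y).
  by rewrite (ipBl hH) (ipBr hH) gram_sa.
have rho01 : 0 <= Num.sqrt q < 1 by rewrite sqrtr_ge0 /= -sqrtr1 ltr_sqrt ?ltr01.
have B_le x : nrm (x - gram x) <= Num.sqrt q * nrm x by apply/nrm_le_sqrt/defect_le.
have [V [linV bV V_sa VV V_comm]] := sqrt_exists hH linB B_sa rho01 B_le.
exists V; split => //; first by move=> x; rewrite VV subKr.
move=> Kop M linK M0 bK K_gram.
have B_comm x : Kop (x - gram x) = Kop x - gram (Kop x) by rewrite (linopB linK) K_gram.
exact: V_comm linK M0 bK B_comm.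
Qed.

(* [U = |T| T^-1] is unitary since [U^* U = T^-* T^* T T^-1 = 1], and
   [U^* K U = T^-* |T| K |T| T^-1 = T K T^-1] when [K] commutes with [T^* T]. *)
Lemma polar_unitary : exists U, unitary_op ip U /\
  forall Kop, bounded_op ip Kop -> (forall x, Kop (gram x) = gram (Kop x)) ->
    forall h k, ip (U h) (Kop (U k)) = ip h (T (Kop (S k))).
Proof.
have [V [linV bV V_sa VV V_comm]] := abs_exists.
have [linS [K K0 bS']] := bounded_opP hH bS; have [linT [MT MT0 bT']] := bounded_opP hH bT.
have linGi : linop gram_inv := linop_comp linS (adjoint_linop hH S_adj).
have bGi : op_bound ip gram_inv (K * K).
  exact: op_bound_comp K0 bS' (adjoint_op_bound hH S_adj K0 bS').
have Gi_gram x : gram_inv (gram x) = gram (gram_inv x) by rewrite gram_invK gramK.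
have V_gram_inv := V_comm _ _ linGi (mulr_ge0 K0 K0) bGi Gi_gram.
pose W := V \o gram_inv.
have VW x : V (W x) = x by rewrite /W /= VV gramK.
have WV x : W (V x) = x by rewrite /W /= -V_gram_inv VV gram_invK.
have four_ge0 : 0 <= 4 :> R by [].
exists (V \o S); split.
  split.
    apply: (bounded_opI hH (M := 4 * K)); first exact: linop_comp.
      exact: mulr_ge0.
    exact: op_bound_comp.
  exists (T \o W); split => [|h k /=|h /=|k /=].
  - apply: (bounded_opI hH (M := MT * (4 * (K * K)))).
    + by apply: linop_comp => //; apply: linop_comp.
    + by rewrite !mulr_ge0.
    + by apply: op_bound_comp => //; apply: op_bound_comp.
  - by rewrite V_sa -{1}(VW k) VV ip_gram SK.
  - by rewrite WV SK.
  - by rewrite TK VW.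
move=> Kop bK K_gram h k /=; have [linK [M M0 bK']] := bounded_opP hH bK.
by rewrite V_sa (V_comm _ _ linK M0 bK' K_gram) VV ip_gram SK.
Qed.
End Polar.

Theorem corollary3p9 (R : realType) (d : measure_display)
  (X : measurableType d) (A : algType R[i]) (star : A -> A)
  (nA : A -> R[i]) (H : lmodType R[i]) (ip : H -> H -> R[i])
  (hA : unital_Cstar_algebra star nA) (hH : hilbert_space ip)
  (I : set X -> A -> H -> H) :
  spectral_instrument star ip I -> Cstar_extreme star ip I.
Proof.
move=> spectral_I n T J T_inv UCP_J sum_TT I_decomp.
suff U_i i : exists U, unitary_op ip U /\ forall E, measurable E ->
    forall a h k, ip h (J i E a k) = ip (U h) (I E a (U k)).
  by exists (fun i => sval (cid (U_i i))) => i; exact: svalP (cid (U_i i)).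
have [bT [S [bS [TK SK]]]] := T_inv i.
have [linT [MT _ bT']] := bounded_opP hH bT; have [linS [MS _ bS']] := bounded_opP hH bS.
have [T' T_adj] := adjoint_exists hH linT bT'; have [S' S_adj] := adjoint_exists hH linS bS'.
have [U [U_unitary U_conj]] := polar_unitary hH bT bS TK SK T_adj S_adj
  (sum_TT_contraction hH sum_TT i).
exists U; split => // E mE a h k.
have [_ /(_ E mE) [_ /(_ a) bIa _ _]] := spectral_I.
have I_gram := instrument_gram_comm hA hH spectral_I UCP_J sum_TT I_decomp mE T_adj a.
rewrite (U_conj _ bIa I_gram).
by rewrite -{1}(SK k) (instrument_intertwine hA hH spectral_I UCP_J sum_TT I_decomp).
Qed.
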